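(* Every quilt-affine function $g:\mathbb{N}^d\to\mathbb{N}$ (i.e. quilt-affine with nonnegative values) is obliviously-computable.
   Context: A function $g:\mathbb{N}^d\to\mathbb{Z}$ is quilt-affine if it is nondecreasing (componentwise order) and there exist $p\in\mathbb{N}_+$, $\vec{\nabla}\in\mathbb{Q}^d_{\ge0}$ and $B:\mathbb{Z}^d/p\mathbb{Z}^d\to\mathbb{Q}$ with $g(\vec{x})=\vec{\nabla}\cdot\vec{x}+B(\vec{x}\bmod p)$ for all $\vec{x}$, where $\vec{x}\bmod p$ is the class $\{\vec{x}+p\vec{z}:\vec{z}\in\mathbb{Z}^d\}$. A chemical reaction network (CRN) is a pair $(\mathcal{S},\mathcal{R})$ of a finite set of species and a finite set of reactions $(\vec{R},\vec{P})\in\mathbb{N}^{\mathcal{S}}\times\mathbb{N}^{\mathcal{S}}$. A configuration is $\vec{C}\in\mathbb{N}^{\mathcal{S}}$; a reaction is applicable if $\vec{R}\le\vec{C}$ and yields $\vec{C}-\vec{R}+\vec{P}$; reachability is via finite sequences of applicable reactions. To compute $g:\mathbb{N}^d\to\mathbb{N}$ the CRN has input species $X_1,\ldots,X_d$, output species $Y$, leader species $L$; the initial configuration $\vec{I}_{\vec{x}}$ has $\vec{x}(i)$ copies of $X_i$, one $L$, nothing else. $\vec{C}$ is stable if all configurations reachable from it have the same count of $Y$. The CRN stably computes $g$ if for every $\vec{x}$ and every $\vec{C}$ reachable from $\vec{I}_{\vec{x}}$ some stable $\vec{O}$ reachable from $\vec{C}$ has $\vec{O}(Y)=g(\vec{x})$.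 The CRN is output-oblivious if $Y$ is never a reactant; a function is obliviously-computable if stably computed by an output-oblivious CRN. *)

From HB Require Import structures.
From mathcomp Require Import all_boot all_order all_algebra.
Set Implicit Arguments. Unset Strict Implicit. Unset Printing Implicit Defensive.
Import Order.TTheory GRing.Theory Num.Theory.

Definition vle (d : nat) (x y : 'I_d -> nat) : Prop := forall i, x i <= y i.

(* g : N^d -> N is quilt-affine (viewed as a function into Z):
   nondecreasing, and g x = nabla . x + B (x mod p) with p > 0,
   nabla in Q^d_{>=0}; the class x mod p is represented by its vector of
   residues (x i %% p)_i, so B is any function of that residue vector. *)
Definition quilt_affine (d : nat) (g : ('I_d -> nat) -> nat) : Prop :=
  (forall x y, vle x y -> g x <= g y) /\
  exists (p : nat) (nabla : 'I_d -> rat) (B : ('I_d -> nat) -> rat),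
    (0 < p)%N /\ (forall i, 0 <= nabla i)%R /\
    forall x, ((g x)%:R = \sum_(i < d) nabla i * (x i)%:R
                         + B (fun i => modn (x i) p))%R.

Definition config (S : finType) := {ffun S -> nat}.
Definition reaction (S : finType) := (config S * config S)%type.

Definition applicable (S : finType) (r : reaction S) (c : config S) : Prop :=
  forall s, r.1 s <= c s.

Definition step (S : finType) (rs : seq (reaction S)) (c c' : config S) : Prop :=
  exists2 r, r \in rs &
    applicable r c /\ c' = [ffun s => c s - r.1 s + r.2 s].

Inductive reachable (S : finType) (rs : seq (reaction S)) :
    config S -> config S -> Prop :=
  | reach_refl c : reachable rs c c
  | reach_step c c' c'' : step rs c c' -> reachable rs c' c'' ->
      reachable rs c c''.

Definition stable (S : finType) (rs : seq (reaction S)) (Y : S) (c : config S) :=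
  forall c', reachable rs c c' -> c' Y = c Y.

Definition init_config (S : finType) (d : nat) (X : 'I_d -> S) (L : S)
    (x : 'I_d -> nat) : config S :=
  [ffun s => (\sum_(i < d | X i == s) x i) + (s == L)].

Definition stably_computes (S : finType) (rs : seq (reaction S)) (d : nat)
    (X : 'I_d -> S) (Y L : S) (g : ('I_d -> nat) -> nat) : Prop :=
  forall x c, reachable rs (init_config X L x) c ->
    exists o, [/\ reachable rs c o, stable rs Y o & o Y = g x].

Definition output_oblivious (S : finType) (rs : seq (reaction S)) (Y : S) :=
  forall r, r \in rs -> r.1 Y = 0.

Definition obliviously_computable (d : nat) (g : ('I_d -> nat) -> nat) : Prop :=
  exists (S : finType) (rs : seq (reaction S)) (X : 'I_d -> S) (Y L : S),
    [/\ injective X, (forall i, X i != Y), (forall i, X i != L) & Y != L] /\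
    output_oblivious rs Y /\ stably_computes rs X Y L g.

From HB Require Import structures.
From mathcomp Require Import all_boot all_order all_algebra.
From mathcomp Require Import ring.
From Stdlib Require Import FunctionalExtensionality.
Set Implicit Arguments. Unset Strict Implicit. Unset Printing Implicit Defensive.
Import Order.TTheory GRing.Theory Num.Theory.

(* The network keeps a single "state" molecule recording the residues mod p of
   the input consumed so far.  Consuming one X_i in state r emits
   g (r + e_i) - g r copies of Y; for a quilt-affine g this equals
   g (y + e_i) - g y for every y congruent to r, since the linear part
   contributes the constant nabla_i and B only sees residues.  Hence after
   consuming y the network holds exactly g y copies of Y, never consumes Y,
   and halts once the whole input x is consumed, holding g x copies of Y. *)

Section Reachability.
Variables (S : finType) (rs : seq (reaction S)).

Definition fire (r : reaction S) (c : config S) : config S :=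
  [ffun s => c s - r.1 s + r.2 s].

Lemma step_fire r c : r \in rs -> applicable r c -> step rs c (fire r c).
Proof. by move=> r_rs r_app; exists r. Qed.

Lemma reachable_invariant (P : config S -> Prop) c c' :
  (forall c1 c2, P c1 -> step rs c1 c2 -> P c2) ->
  reachable rs c c' -> P c -> P c'.
Proof. by move=> P_step; elim=> // c1 c2 c3 c12 _ IH /P_step/(_ c12). Qed.

Lemma stable_terminal (Y : S) c : (forall c', ~ step rs c c') -> stable rs Y c.
Proof.
by move=> terminal c' cc'; case: cc' terminal => // c0 c1 c2 c01 _ /(_ c1 c01).
Qed.

End Reachability.

Definition succ_at d (y : 'I_d -> nat) (i : 'I_d) : 'I_d -> nat :=
  fun j => y j + (j == i).

Lemma vle_succ_at d (x y : 'I_d -> nat) i :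
  vle y x -> y i < x i -> vle (succ_at y i) x.
Proof.
by move=> le_yx lt_yx j; rewrite /succ_at; case: eqP => [->|]; rewrite ?addn1 ?addn0.
Qed.

Lemma gap_succ_at d (x y : 'I_d -> nat) i : y i < x i ->
  \sum_j (x j - y j) = (\sum_j (x j - succ_at y i j)).+1.
Proof.
move=> lt_yx; rewrite (bigD1 i) //= [X in _ = X.+1](bigD1 i) //= /succ_at eqxx addn1.
rewrite [X in _ = (_ + X).+1](eq_bigr (fun j => x j - y j)) => [|j /negbTE ->].
  by rewrite -addSn subnSK.
by rewrite addn0.
Qed.

Definition increments_periodic d m (g : ('I_d -> nat) -> nat) :=
  forall y z i, (forall j, y j = z j %[mod m]) ->
    g (succ_at y i) - g y = g (succ_at z i) - g z.

Lemma affine_increments_periodic (R : numDomainType) d (g : ('I_d -> nat) -> nat)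
    (p : nat) (nabla : 'I_d -> R) (B : ('I_d -> nat) -> R) :
  (forall y i, g y <= g (succ_at y i)) ->
  (forall x, ((g x)%:R = \sum_i nabla i * (x i)%:R + B (fun i => (x i %% p)%N))%R) ->
  increments_periodic p g.
Proof.
move=> g_succ g_affine.
have incrE y i : ((g (succ_at y i) - g y)%:R
    = nabla i + B (fun j => (succ_at y i j %% p)%N) - B (fun j => (y j %% p)%N) :> R)%R.
  rewrite natrB // !g_affine /succ_at.
  under eq_bigr do rewrite natrD mulrDr.
  rewrite big_split /=.
  have -> : (\sum_j nabla j * (j == i)%:R = nabla i)%R.
    rewrite (bigD1 i) //= eqxx mulr1 big1 ?addr0 // => j /negbTE ->.
    by rewrite mulr0.
  by ring.
move=> y z i yz; apply/eqP; rewrite -(eqr_nat R) !incrE.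
have -> : (fun j => y j %% p) = (fun j => z j %% p).
  exact: functional_extensionality.
have -> // : (fun j => succ_at y i j %% p) = (fun j => succ_at z i j %% p).
by apply: functional_extensionality => j; rewrite /succ_at -modnDml yz modnDml.
Qed.

Inductive species (d m : nat) :=
  | Output | Leader | Input of 'I_d | State of {ffun 'I_d -> 'I_m}.
Arguments Output {d m}. Arguments Leader {d m}.
Arguments Input {d m}. Arguments State {d m}.

Definition species_code d m (s : species d m) : bool + 'I_d + {ffun 'I_d -> 'I_m} :=
  match s with
  | Output => inl (inl true) | Leader => inl (inl false)
  | Input i => inl (inr i) | State r => inr r
  end.

Definition species_decode d m (c : bool + 'I_d + {ffun 'I_d -> 'I_m}) : species d m :=
  match c with
  | inl (inl true) => Output | inl (inl false) => Leader
  | inl (inr i) => Input i | inr r => State r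
  end.

Lemma species_codeK d m : cancel (@species_code d m) (@species_decode d m).
Proof. by case. Qed.

HB.instance Definition _ d m :=
  Finite.copy (species d m) (can_type (@species_codeK d m)).

Lemma Input_inj {d m} : injective (@Input d m).
Proof. by move=> i j []. Qed.

Lemma State_inj {d m} : injective (@State d m).
Proof. by move=> r r' []. Qed.

Section ResidueCRN.
Variables (d p : nat) (g : ('I_d -> nat) -> nat).
Hypothesis g_succ : forall y i, g y <= g (succ_at y i).
Hypothesis g_periodic : increments_periodic p.+1 g.

Local Notation species := (species d p.+1).
Local Notation residues := {ffun 'I_d -> 'I_p.+1}.
Local Notation origin := (fun _ : 'I_d => 0).
Local Notation init := (init_config (@Input d p.+1) Leader).

Definition residue (y : 'I_d -> nat) : residues := [ffun j => inZp (y j)].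

Definition representative (r : residues) : 'I_d -> nat := fun j => r j.

Lemma representative_residue y j : representative (residue y) j = y j %[mod p.+1].
Proof. by rewrite /representative ffunE modn_mod. Qed.

Lemma residue_succ_at y i :
  residue (succ_at (representative (residue y)) i) = residue (succ_at y i).
Proof.
apply/ffunP => j; apply/val_inj.
by rewrite !ffunE /= /succ_at /representative ffunE /= modnDml.
Qed.

Definition start_reaction : reaction species :=
  ([ffun s => (s == Leader : nat)],
   [ffun s => (s == State (residue origin)) + (s == Output) * g origin]).

Definition advance_reaction (r : residues) (i : 'I_d) : reaction species :=
  let y := representative r in
  ([ffun s => (s == State r) + (s == Input i)],
   [ffun s => (s == State (residue (succ_at y i)))
              + (s == Output) * (g (succ_at y i) - g y)]).

Definition crn : seq (reaction species) :=
  start_reaction :: [seq advance_reaction ri.1 ri.2 | ri <- enum {: residues * 'I_d}].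

Lemma crn_cases r : r \in crn ->
  r = start_reaction \/ exists r' i, r = advance_reaction r' i.
Proof.
rewrite inE => /predU1P[-> | /mapP[[r' i] _ ->]]; first by left.
by right; exists r', i.
Qed.

Lemma advance_in_crn r i : advance_reaction r i \in crn.
Proof. by rewrite inE; apply/predU1P; right; apply/mapP; exists (r, i); rewrite ?mem_enum. Qed.

Lemma crn_output_oblivious : output_oblivious crn Output.
Proof. by move=> r /crn_cases[-> | [r' [i ->]]]; rewrite ffunE. Qed.

Definition config_at (x y : 'I_d -> nat) : config species :=
  [ffun s => match s with
   | Output => g y
   | Leader => 0
   | Input i => x i - y i
   | State r => r == residue y
   end].

Lemma initE x (s : species) :
  init x s = match s with Leader => 1 | Input i => x i | _ => 0 end.
Proof.
rewrite ffunE; case: s => [| |j|r] /=; try by rewrite big_pred0.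
by rewrite (eq_bigl (pred1 j)) => [|i]; rewrite ?big_pred1_eq ?addn0 ?(inj_eq Input_inj).
Qed.

Lemma fire_start x : fire start_reaction (init x) = config_at x origin.
Proof.
apply/ffunP => s; rewrite ffunE initE !ffunE.
by case: s => [| |j|r] /=; rewrite ?subnn ?subn0 ?addn0 ?mul1n ?mul0n.
Qed.

Lemma step_start x : step crn (init x) (config_at x origin).
Proof.
rewrite -fire_start; apply: step_fire; first exact: mem_head.
by move=> s; rewrite initE ffunE; case: s.
Qed.

Lemma step_from_init x c : step crn (init x) c -> c = config_at x origin.
Proof.
case=> r /crn_cases[-> [_ ->] | [r' [i ->]] [r_app _]]; first exact: fire_start.
by have := r_app (State r'); rewrite initE ffunE /= eqxx.
Qed.

Lemma applicable_advance r i x y :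
  applicable (advance_reaction r i) (config_at x y) <-> r = residue y /\ y i < x i.
Proof.
split=> [r_app | [-> lt_yx] s].
  have := r_app (State r); have := r_app (Input i); rewrite !ffunE /= !eqxx.
  by rewrite subn_gt0; case: eqP.
rewrite !ffunE; case: s => [| |j|r'] //=.
  by rewrite (inj_eq Input_inj); case: eqP => [->|]; rewrite ?subn_gt0.
by rewrite (inj_eq State_inj) addn0.
Qed.

Lemma fire_advance x y i : y i < x i ->
  fire (advance_reaction (residue y) i) (config_at x y) = config_at x (succ_at y i).
Proof.
move=> lt_yx; apply/ffunP => s; rewrite !ffunE residue_succ_at.
case: s => [| |j|r] /=.
- rewrite (g_periodic i (representative_residue y)) subn0 mul1n add0n.
  by rewrite subnKC ?g_succ.
- by [].
- by rewrite (inj_eq Input_inj) /succ_at add0n mul0n !addn0 subnDA eq_sym.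
- by rewrite !(inj_eq State_inj) !addn0 subnn.
Qed.

Lemma step_advance x y i : y i < x i ->
  step crn (config_at x y) (config_at x (succ_at y i)).
Proof.
move=> lt_yx; rewrite -fire_advance //.
by apply: step_fire; [exact: advance_in_crn | apply/applicable_advance].
Qed.

Lemma step_from_config x y c : step crn (config_at x y) c ->
  exists2 i, y i < x i & c = config_at x (succ_at y i).
Proof.
case=> r /crn_cases[-> [r_app _] | [r' [i ->]] [/applicable_advance[-> lt_yx] ->]].
  by have := r_app Leader; rewrite !ffunE.
by exists i; last exact: fire_advance.
Qed.

Lemma reachable_config_full x y : vle y x ->
  reachable crn (config_at x y) (config_at x x).
Proof.
have [n] : exists n, \sum_i (x i - y i) = n by eexists.
elim: n y => [|n IH] y gap le_yx.
  suff -> : y = x by exact: reach_refl.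
  apply: functional_extensionality => i; apply/eqP; rewrite eqn_leq le_yx /=.
  by rewrite -subn_eq0; move/eqP: gap; rewrite sum_nat_eq0 => /forallP/(_ i).
have [i lt_yx | ge_yx] := pickP (fun i => y i < x i); last first.
  by move: gap; rewrite big1 // => i _; apply/eqP; rewrite subn_eq0 leqNgt ge_yx.
apply: reach_step (step_advance lt_yx) (IH _ _ (vle_succ_at le_yx lt_yx)).
by move: gap; rewrite (gap_succ_at lt_yx) => -[].
Qed.

Lemma stable_config_full x : stable crn Output (config_at x x).
Proof. by apply: stable_terminal => c /step_from_config[i]; rewrite ltnn. Qed.

Definition consuming x c := c = init x \/ exists2 y, vle y x & c = config_at x y.

Lemma consuming_step x c c' : consuming x c -> step crn c c' -> consuming x c'.
Proof.
case=> [-> /step_from_init -> | [y le_yx ->] /step_from_config[i lt_yx ->]].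
  by right; exists origin.
by right; exists (succ_at y i); first exact: vle_succ_at.
Qed.

Lemma crn_stably_computes : stably_computes crn Input Output Leader g.
Proof.
move=> x c reach_c; exists (config_at x x); split; last by rewrite ffunE.
- have [-> | [y le_yx ->]] :=
    reachable_invariant (@consuming_step x) reach_c (or_introl erefl).
    exact: reach_step (step_start x) (reachable_config_full _).
  exact: reachable_config_full.
- exact: stable_config_full.
Qed.

End ResidueCRN.

Theorem lemma14 (d : nat) (g : ('I_d -> nat) -> nat) :
  quilt_affine g -> obliviously_computable g.
Proof.
move=> [g_mono [p [nabla [B [p_gt0 [_ g_affine]]]]]].
have g_succ y i : g y <= g (succ_at y i) by apply: g_mono => j; exact: leq_addr.
have := affine_increments_periodic g_succ g_affine.
case: p p_gt0 {g_affine} => // p _ g_periodic.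
exists (species d p.+1), (crn p g), Input, Output, Leader.
split; first by split=> // i j [].
split; first exact: crn_output_oblivious.
exact: crn_stably_computes.
Qed.
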